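(* Let $\varphi:G\times X\to X$ be an action of a metrizable group $G$ on a non-meagre metric space $X$. If each point-evaluation map $\varphi_x:g\mapsto\varphi(g,x)$ is countably-covered and takes open sets to sets with the Baire property, then the action is a Nikodym action.
   Context: A group action satisfies $\varphi(e_G,x)=x$, $\varphi(gh,x)=\varphi(g,\varphi(h,x))$; write $Ux=\varphi_x(U)$. The map $\varphi_x$ is countably-covered if there exist self-homeomorphisms $h^x_n$ ($n\in\mathbb N$) of $X$ such that for every open neighbourhood $U$ (of $e_G$) in $G$ the sets $\{h^x_n(\varphi_x(U)):n\in\mathbb N\}$ cover $X$. The action is a Nikodym action if for every non-empty open neighbourhood $U$ of $e_G$ and every $x\in X$, $Ux$ contains a non-meagre set with the Baire property. *)

From HB Require Import structures.
From mathcomp Require Import all_boot all_order all_algebra.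
From mathcomp Require Import all_classical all_reals all_analysis.
Set Implicit Arguments. Unset Strict Implicit. Unset Printing Implicit Defensive.
Import Order.TTheory GRing.Theory Num.Theory.
Local Open Scope classical_set_scope.

Definition nowhere_dense {T : topologicalType} (A : set T) : Prop :=
  (closure A)° = set0.

Definition meagre {T : topologicalType} (A : set T) : Prop :=
  exists F : nat -> set T,
    (forall n, nowhere_dense (F n)) /\ A `<=` \bigcup_n F n.

Definition baire_property {T : topologicalType} (A : set T) : Prop :=
  exists U : set T, open U /\ meagre ((A `\` U) `|` (U `\` A)).

Definition homeomorphism {T : topologicalType} (h : T -> T) : Prop :=
  exists g : T -> T, cancel h g /\ cancel g h /\ continuous h /\ continuous g.

Definition topological_group {G : topologicalType}
  (mul : G -> G -> G) (inv : G -> G) (e : G) : Prop :=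
  (forall a b c, mul a (mul b c) = mul (mul a b) c) /\
  (forall a, mul e a = a) /\ (forall a, mul a e = a) /\
  (forall a, mul (inv a) a = e) /\ (forall a, mul a (inv a) = e) /\
  continuous (fun p : G * G => mul p.1 p.2) /\ continuous inv.

Definition group_action {G X : Type} (mul : G -> G -> G) (e : G)
  (phi : G -> X -> X) : Prop :=
  (forall x, phi e x = x) /\ (forall g h x, phi (mul g h) x = phi g (phi h x)).

Definition evalmap {G X : Type} (phi : G -> X -> X) (x : X) : G -> X :=
  fun g => phi g x.

Definition countably_covered {G X : topologicalType} (e : G)
  (f : G -> X) : Prop :=
  exists h : nat -> X -> X, (forall n, homeomorphism (h n)) /\
    forall U : set G, open U -> U e ->
      [set: X] `<=` \bigcup_n (h n @` (f @` U)).

Definition nikodym_action {G X : topologicalType} (e : G)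
  (phi : G -> X -> X) : Prop :=
  forall (U : set G) (x : X), open U -> U e -> U !=set0 ->
    exists A : set X, A `<=` evalmap phi x @` U /\ ~ meagre A /\ baire_property A.

(** If some neighbourhood orbit [Ux] were meagre, so would be each of its
    homeomorphic copies [h_n(Ux)], hence their countable union; but these
    copies cover the non-meagre space [X]. So [Ux] itself is a non-meagre set
    with the Baire property. *)
From HB Require Import structures.
From mathcomp Require Import all_boot all_order all_algebra.
From mathcomp Require Import all_classical all_reals all_analysis.
Local Open Scope classical_set_scope.

Section Homeomorphic_images.
Context {T : topologicalType}.

Lemma closure_preimage_subset (g : T -> T) (A : set T) :
  continuous g -> closure (g @^-1` A) `<=` g @^-1` closure A.
Proof.
move=> gc x clx N Ngx.
have [z [Az Nz]] := clx _ (gc x N Ngx).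
by exists (g z).
Qed.

Lemma interior_preimage_subset (h g : T -> T) (B : set T) :
  cancel h g -> cancel g h -> continuous h -> (g @^-1` B)° `<=` g @^-1` B°.
Proof.
move=> hg gh hc x gBx.
have hgB : h @^-1` (g @^-1` B) = B by apply/seteqP; split => y /=; rewrite hg.
have hgx : h @ g x --> x by rewrite -{2}(gh x); exact: hc.
by rewrite /interior /= -hgB; exact: hgx.
Qed.

Lemma nowhere_dense_preimage (h g : T -> T) (A : set T) :
  cancel h g -> cancel g h -> continuous h -> continuous g ->
  nowhere_dense A -> nowhere_dense (g @^-1` A).
Proof.
move=> hg gh hc gc ndA; apply/seteqP; split=> [x clx|//].
have : (closure A)° (g x).
  apply: (@interior_preimage_subset h g (closure A) hg gh hc).
  by apply: interiorS clx; exact: closure_preimage_subset.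
by rewrite ndA.
Qed.

Lemma meagre_image_homeomorphism (h : T -> T) (A : set T) :
  homeomorphism h -> meagre A -> meagre (h @` A).
Proof.
move=> [g [hg [gh [hc gc]]]] [F [ndF AF]].
exists (fun n => g @^-1` F n); split=> [n|x [y Ay <-]].
  exact: nowhere_dense_preimage hg gh hc gc (ndF n).
have [n _ Fy] := AF _ Ay.
by exists n => //=; rewrite hg.
Qed.

End Homeomorphic_images.

Lemma meagre_subset {T : topologicalType} (A B : set T) :
  A `<=` B -> meagre B -> meagre A.
Proof. by move=> AB [F [ndF BF]]; exists F; split => // x /AB /BF. Qed.

Lemma meagre_bigcup {T : topologicalType} (B : nat -> set T) :
  (forall n, meagre (B n)) -> meagre (\bigcup_n B n).
Proof.
move=> mB.
have [F FP] := choice mB.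
exists (fun k => if @unpickle (nat * nat)%type k is Some p then F p.1 p.2 else set0).
split=> [k|x [n _ Bx]].
  case: unpickle => [p|] /=; first exact: (FP p.1).1.
  by rewrite /nowhere_dense closure0 interior0.
have [m _ Fx] := (FP n).2 _ Bx.
by exists (pickle (n, m)) => //; rewrite pickleK.
Qed.

Lemma countably_covered_image_not_meagre {G X : topologicalType} (e : G)
    (f : G -> X) (U : set G) :
  ~ meagre [set: X] -> countably_covered e f -> open U -> U e ->
  ~ meagre (f @` U).
Proof.
move=> nmX [h [hh cov]] oU Ue mfU; apply: nmX.
apply: meagre_subset (cov U oU Ue) _.
by apply: meagre_bigcup => n; exact: meagre_image_homeomorphism.
Qed.

Theorem proposition1 (R : realType)
  (G : pseudoMetricType R) (mul : G -> G -> G) (inv : G -> G) (e : G)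
  (X : pseudoMetricType R) (phi : G -> X -> X) :
  hausdorff_space G -> topological_group mul inv e ->
  hausdorff_space X -> ~ meagre [set: X] ->
  group_action mul e phi ->
  (forall x : X, countably_covered e (evalmap phi x)) ->
  (forall (x : X) (U : set G), open U -> baire_property (evalmap phi x @` U)) ->
  nikodym_action e phi.
Proof.
move=> _ _ _ nmX _ cc bp U x oU Ue _.
exists (evalmap phi x @` U); split=> //; split; last exact: bp.
exact: countably_covered_image_not_meagre nmX (cc x) oU Ue.
Qed.
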